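(* Let $d\ge 1$, let $\Omega\subset\mathbb{R}^d$ be a bounded domain, let $f:\Omega\to\mathbb{R}^d$ be an input function, let $g\in\mathbb{R}^d$ and let $R\in\mathbb{R}^{d\times d}$ be an orthogonal matrix. Define the transformed domain $\tilde\Omega:=\{Rx+g: x\in\Omega\}$ and the transformed input $\tilde f:\tilde\Omega\to\mathbb{R}^d$ by $\tilde f(Rx+g):=Rf(x)$. Let $\tilde{\mathcal{G}}[\,\cdot\,;\theta]$ be the INO-scalar operator described in the context, with any fixed parameter set $\theta$. Then for every $x\in\Omega$, $$\tilde{\mathcal{G}}[\tilde f;\theta](Rx+g)=\tilde{\mathcal{G}}[f;\theta](x),$$ where the left-hand side is computed on the domain $\tilde\Omega$ and the right-hand side on $\Omega$. That is, the INO-scalar architecture is translation- and rotation-invariant.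
   Context: INO-scalar architecture. Fix integers $d_h\ge1$, $L\ge1$, $d_Q\ge 1$, a fictitious time step $\tau>0$, and an activation function $\sigma:\mathbb{R}\to\mathbb{R}$ (applied componentwise). The parameter set $\theta$ consists of $P,p\in\mathbb{R}^{d_h}$, $W\in\mathbb{R}^{d_h\times d_h}$, $c\in\mathbb{R}^{d_h}$, a kernel function $\kappa(\cdot;v)$ with values in $\mathbb{R}^{d_h\times d_h}$ (e.g. an MLP with parameters $v$), and $Q_1\in\mathbb{R}^{d_Q\times d_h}$, $q_1\in\mathbb{R}^{d_Q}$, $Q_2\in\mathbb{R}^{1\times d_Q}$, $q_2\in\mathbb{R}$. Edge encoding: for a pair of points $x,y$ in the domain, $\overline{y-x}$ denotes a frame-invariant encoding of the edge from $x$ to $y$; in 2D it is $\overline{y-x}:=[|y-x|\cos\vartheta,\ |y-x|\sin\vartheta]$, where $|\cdot|$ is the Euclidean norm and $\vartheta$ is the orientation of $y-x$ relative to a local reference edge fixed in the body (e.g. the vector between two fixed nodes of the undeformed configuration); in 3D it is built analogously from $|y-x|$ and two orientation angles. Since the reference edge moves with the body, the encoding attached to the pair $(Rx+g,Ry+g)$ in the transformed frame coincides with the encoding $\overline{y-x}$ attached to $(x,y)$. Given an input $f$ on a domain $\Omega$, the operator is defined by: lifting $h(x,0):=P|f(x)|+p$; kernel $m(x,y):=\kappa(\overline{y-x},|f(x)|,|f(y)|;v)$; iterative layers, for $j=0,\dots,L-1$, $$h(x,(j+1)\tau):=h(x,j\tau)+\tau\,\sigma\Big(Wh(x,j\tau)+\int_\Omega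 m(x,y)h(y,j\tau)\,dy+c\Big);$$ projection $\tilde{\mathcal{G}}[f;\theta](x):=Q_2\sigma(Q_1h(x,L\tau)+q_1)+q_2$. All integrals are assumed to exist. *)

From HB Require Import structures.
From mathcomp Require Import all_boot all_order all_algebra.
From mathcomp Require Import all_classical all_reals all_analysis.

Set Implicit Arguments.
Unset Strict Implicit.
Unset Printing Implicit Defensive.

Import Order.TTheory GRing.Theory Num.Theory.
Import numFieldNormedType.Exports.
Local Open Scope classical_set_scope.
Local Open Scope ring_scope.

Definition enorm {R : realType} {n : nat} (v : 'cV[R]_n) : R :=
  Num.sqrt (\sum_(i < n) v i ord0 ^+ 2).

Definition orthogonal_mx {R : realType} {n : nat} (Q : 'M[R]_n) : Prop :=
  Q^T *m Q = 1%:M.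

Definition bounded_domain {R : realType} {d : nat} (O : set 'cV[R]_d) : Prop :=
  O !=set0 /\ open O /\ connected O /\ exists M : R, forall x, O x -> enorm x <= M.

Definition Rd_borel (R : realType) (d : nat) :=
  g_sigma_algebraType (@open 'cV[R]_d).

Definition box {R : realType} {d : nat} (a b : 'cV[R]_d) : set 'cV[R]_d :=
  [set x | forall i, a i ord0 < x i ord0 <= b i ord0].

(* mu is the d-dimensional Lebesgue measure (on Borel sets): it is a measure
   assigning to every box its volume.  Such a measure exists and is unique. *)
Definition is_lebesgue_measure {R : realType} {d : nat}
  (mu : {measure set (Rd_borel R d) -> \bar R}) : Prop :=
  forall a b : 'cV[R]_d, (forall i, a i ord0 <= b i ord0) ->
    mu (box a b : set (Rd_borel R d)) = (\prod_(i < d) (b i ord0 - a i ord0))%:E.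

(* Parameters theta of INO-scalar.  k is the dimension of the edge encoding.
   The kernel network kappa(.; v) is represented by the function it computes. *)
Record ino_params (R : realType) (k dh dQ : nat) := InoParams {
  ino_P : 'cV[R]_dh;
  ino_p : 'cV[R]_dh;
  ino_W : 'M[R]_dh;
  ino_c : 'cV[R]_dh;
  ino_kappa : 'cV[R]_k -> R -> R -> 'M[R]_dh;
  ino_Q1 : 'M[R]_(dQ, dh);
  ino_q1 : 'cV[R]_dQ;
  ino_Q2 : 'M[R]_(1, dQ);
  ino_q2 : R }.

Section INO.
Variables (R : realType) (d k dh dQ L : nat) (tau : R) (sigma : R -> R).
Variable (mu : {measure set (Rd_borel R d) -> \bar R}).
Variable (th : ino_params R k dh dQ).
(* domain, edge encoding on that domain (enc x y = encoding of edge x -> y),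
   input function *)
Variables (Om : set 'cV[R]_d) (enc : 'cV[R]_d -> 'cV[R]_d -> 'cV[R]_k)
          (f : 'cV[R]_d -> 'cV[R]_d).

Definition ino_kernel (x y : 'cV[R]_d) : 'M[R]_dh :=
  ino_kappa th (enc x y) (enorm (f x)) (enorm (f y)).

Definition ino_int (h : 'cV[R]_d -> 'cV[R]_dh) (x : 'cV[R]_d) : 'cV[R]_dh :=
  \col_(i < dh) Rintegral mu (Om : set (Rd_borel R d))
                  (fun y : Rd_borel R d => (ino_kernel x y *m h y) i ord0).

Fixpoint ino_hidden (j : nat) : 'cV[R]_d -> 'cV[R]_dh :=
  match j with
  | 0 => fun x => enorm (f x) *: ino_P th + ino_p th
  | j'.+1 => fun x =>
      let h := ino_hidden j' in
      h x + tau *: map_mx sigma (ino_W th *m h x + ino_int h x + ino_c th)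
  end.

Definition ino_scalar (x : 'cV[R]_d) : R :=
  (ino_Q2 th *m map_mx sigma (ino_Q1 th *m ino_hidden L x + ino_q1 th)) ord0 ord0
  + ino_q2 th.

End INO.

(* The layers of INO-scalar see the input only through the edge encodings, the
   norms |f(x)| and kernel integrals over the domain.  A rigid motion
   x |-> Q x + g preserves the encodings by hypothesis and the norms because Q
   is orthogonal; it also preserves Lebesgue measure, so the substitution
   y = Q z + g turns each kernel integral over the moved domain into the
   corresponding one over Omega, and induction over the layers identifies the
   hidden states and hence the outputs.
   Lebesgue measure is translation invariant because a measure is determined by
   its values on boxes.  Its image under a rotation is translation invariant and
   finite on boxes; since the measure of a box is then additive and monotone in
   each side length, that image is c times Lebesgue measure, and c = 1 because
   the rotation maps the unit ball onto itself. *)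

From HB Require Import structures.
From mathcomp Require Import all_boot all_order all_algebra.
From mathcomp Require Import all_classical all_reals all_analysis.
From mathcomp Require Import ring lra.
Set Implicit Arguments.
Unset Strict Implicit.
Unset Printing Implicit Defensive.

Import Order.TTheory GRing.Theory Num.Theory.
Import numFieldNormedType.Exports.
Local Open Scope classical_set_scope.
Local Open Scope ring_scope.

Section integral_measure_preserving.
Local Open Scope ereal_scope.
Import HBNNSimple.
Context d (T : measurableType d) (R : realType) (mu : {measure set T -> \bar R}).

Section measure_preserving_comp.
Variable S : T -> T.
Hypothesis mS : measurable_fun setT S.
Hypothesis muS : forall A, measurable A -> mu (S @^-1` A) = mu A.

Section nnsfun_comp.
Variable h : {nnsfun T >-> R}.

Definition nnsfun_comp_fun x := h (S x).

Let measurable_comp : measurable_fun setT nnsfun_comp_fun.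
Proof. exact: measurableT_comp. Qed.
HB.instance Definition _ := isMeasurableFun.Build _ _ _ _ _ measurable_comp.

Let finite_range_comp : finite_set (range nnsfun_comp_fun).
Proof. by apply: sub_finite_set (fimfunP h) => _ [x _ <-]; exists (S x). Qed.
HB.instance Definition _ := FiniteImage.Build _ _ _ finite_range_comp.

Let comp_ge0 x : (0 <= nnsfun_comp_fun x)%R.
Proof. exact: fun_ge0. Qed.
HB.instance Definition _ := isNonNegFun.Build _ _ _ comp_ge0.

Definition nnsfun_comp : {nnsfun T >-> R} := nnsfun_comp_fun.

Lemma sintegral_comp : sintegral mu nnsfun_comp = sintegral mu h.
Proof.
apply: eq_fsbigr => r _; congr (_ * _).
apply: muS.
by rewrite -[X in measurable X]setTI; apply: (measurable_funP h).
Qed.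

End nnsfun_comp.

Lemma sup_sintegral_le_comp (phi : T -> \bar R) :
  ereal_sup [set sintegral mu h | h in
    [set h : {nnsfun T >-> R} | forall x, (h x)%:E <= phi x]] <=
  ereal_sup [set sintegral mu h | h in
    [set h : {nnsfun T >-> R} | forall x, (h x)%:E <= phi (S x)]].
Proof.
apply: ge_ereal_sup => _ [h hphi <-].
rewrite -sintegral_comp; apply: ereal_sup_ubound.
by exists (nnsfun_comp h) => // x; exact: hphi.
Qed.

End measure_preserving_comp.

Variables S S' : T -> T.
Hypotheses (mS : measurable_fun setT S) (mS' : measurable_fun setT S').
Hypothesis muS : forall A, measurable A -> mu (S @^-1` A) = mu A.
Hypothesis muS' : forall A, measurable A -> mu (S' @^-1` A) = mu A.
Hypothesis SK : cancel S' S.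

(* No measurability of [f] or [D] is needed: the integral is a difference of
   suprema over simple functions, and [h |-> h \o S] maps the simple functions
   below [phi] onto those below [phi \o S]. *)
Lemma integral_measure_preserving D (f : T -> \bar R) :
  \int[mu]_(x in D) f x = \int[mu]_(x in S @^-1` D) f (S x).
Proof.
have sup_comp (phi : T -> \bar R) :
    ereal_sup [set sintegral mu h | h in
      [set h : {nnsfun T >-> R} | forall x, (h x)%:E <= phi x]] =
    ereal_sup [set sintegral mu h | h in
      [set h : {nnsfun T >-> R} | forall x, (h x)%:E <= phi (S x)]].
  apply: le_anti; rewrite (sup_sintegral_le_comp mS muS) /=.
  have {2}-> : phi = fun x => phi (S (S' x)) by apply/funext => x; rewrite SK.
  exact: (sup_sintegral_le_comp mS' muS').
rewrite /integral; congr (_ - _); rewrite sup_comp; congr ereal_sup;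
  by apply/seteqP; split => _ [h hh <-]; exists h => //= x; move: (hh x);
    rewrite ?funeposE ?funenegE /patch.
Qed.

End integral_measure_preserving.

Section Rd_borel_boxes.
Variables (R : realType) (d : nat).
Local Notation V := 'cV[R]_d.
Local Notation B := (Rd_borel R d).

Lemma continuous_sum_fun (I : Type) (s : seq I) (F : I -> V -> R) :
  (forall j, continuous (F j)) -> continuous (fun x => \sum_(j <- s) F j x).
Proof.
move=> cF; elim: s => [|j s IH].
  rewrite (_ : (fun x => _) = cst 0); first exact: cst_continuous.
  by apply/funext => x; rewrite big_nil.
rewrite (_ : (fun x => _) = F j + fun x => \sum_(k <- s) F k x).
  by move=> x; apply: continuousD; [exact: cF|exact: IH].
by apply/funext => x; rewrite big_cons.
Qed.

Lemma continuous_affine_coord (M : 'M[R]_d) (v : V) i :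
  continuous (fun x : V => (M *m x + v) i ord0).
Proof.
rewrite (_ : (fun x => _) =
    (fun x : V => \sum_(j <- index_enum 'I_d) M i j * x j ord0) + cst (v i ord0)).
  move=> x; apply: continuousD; last exact: cst_continuous.
  apply: continuous_sum_fun => j y; apply: continuousM; first exact: cst_continuous.
  exact: coord_continuous.
by apply/funext => x; rewrite !mxE.
Qed.

Lemma open_measurable_Rd (U : set V) : open U -> measurable (U : set B).
Proof. exact: sub_sigma_algebra. Qed.

Lemma measurable_Rd_gt (phi : V -> R) c : continuous phi ->
  measurable ([set x | c < phi x] : set B).
Proof.
move=> cphi; apply: open_measurable_Rd.
by apply: (@open_comp _ _ phi [set x | c < x]) => [x _|]; [exact: cphi|exact: open_gt].
Qed.

Lemma measurable_Rd_le (phi : V -> R) c : continuous phi ->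
  measurable ([set x | phi x <= c] : set B).
Proof.
move=> cphi; rewrite (_ : [set x | _] = ~` [set x | c < phi x]).
  by apply: measurableC; exact: measurable_Rd_gt.
apply/seteqP; split => x /=; rewrite ltNge; first by move=> ->.
by move/negP/negbNE.
Qed.

Lemma measurable_preimage_box (F : V -> V) (a b : V) :
  (forall i, continuous (fun x => F x i ord0)) -> measurable (F @^-1` box a b : set B).
Proof.
move=> cF; rewrite (_ : F @^-1` box a b = \bigcap_(i in [set: 'I_d])
   ([set x : V | a i ord0 < F x i ord0] `&` [set x | F x i ord0 <= b i ord0])).
  apply: fin_bigcap_measurable => [|i _]; first exact: finite_finset.
  by apply: measurableI; [apply: measurable_Rd_gt|apply: measurable_Rd_le].
apply/seteqP; split => x /= h i; first by move=> _; apply/andP; exact: h.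
by have [] := h i I; move=> -> ->.
Qed.

Lemma measurable_box (a b : V) : measurable (box a b : set B).
Proof. by apply: (@measurable_preimage_box id) => i; exact: coord_continuous. Qed.

Definition boxes : set (set V) := [set A | exists a b, A = box a b].

(* Every open set is the countable union of the boxes with rational corners
   that it contains. *)
Lemma open_sigma_boxes (U : set V) : open U -> <<s boxes >> U.
Proof.
move=> oU.
pose I := ('cV[rat]_d * 'cV[rat]_d)%type.
pose rbox (n : nat) : set V := if unpickle n is Some (qa, qb) then
  let A := box (map_mx ratr qa) (map_mx ratr qb) in
  if pselect (A `<=` U) then A else set0 else set0.
rewrite (_ : U = \bigcup_n rbox n).
  apply: sigma_algebra_bigcup => n; rewrite /rbox.
  case: unpickle => [[qa qb]|]; last exact: sigma_algebra0.
  by case: pselect => ?; [apply: sub_sigma_algebra; do 2 eexists|exact: sigma_algebra0].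
apply/seteqP; split => [x Ux|x [n _]]; last first.
  by rewrite /rbox; case: unpickle => [[qa qb]|//]; case: pselect => // + /= hx; apply.
have /nbhs_ballP [e /= e0 xeU] := open_nbhs_nbhs (conj oU Ux).
have /choice [qf Hq] : forall i : 'I_d, exists q : rat * rat,
    x i ord0 - e < ratr q.1 < x i ord0 /\ x i ord0 <= ratr q.2 < x i ord0 + e.
  move=> i.
  have [q1] := @rat_in_itvoo R (x i ord0 - e) (x i ord0) ltac:(by rewrite ltrBlDr ltrDl).
  have [q2] := @rat_in_itvoo R (x i ord0) (x i ord0 + e) ltac:(by rewrite ltrDl).
  rewrite !in_itv /= => /andP[xq2 q2e] q1x.
  by exists (q1, q2); rewrite q1x q2e ltW.
pose qa : 'cV[rat]_d := \col_i (qf i).1.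
pose qb : 'cV[rat]_d := \col_i (qf i).2.
exists (pickle ((qa, qb) : I)) => //; rewrite /rbox pickleK /=.
case: pselect => [_ i|[]]; rewrite ?mxE.
  by have [/andP[_ ->] /andP[-> _]] := Hq i.
move=> y /= hy; apply: xeU; split => // i j; rewrite (ord1 j).
have := hy i; rewrite !mxE => /andP[h1 h2].
have [/andP[q1 _] /andP[_ q2]] := Hq i.
by rewrite -ball_normE /= ltr_distlC (lt_trans q1 h1) (le_lt_trans h2 q2).
Qed.

Lemma Rd_borel_boxes : @measurable _ B = <<s boxes >>.
Proof.
apply/seteqP; split.
  by apply: smallest_sub => [|U /open_sigma_boxes//]; exact: smallest_sigma_algebra.
apply: smallest_sub => [|_ [a [b ->]]]; first exact: sigma_algebra_measurable.
exact: measurable_box.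
Qed.

Lemma setI_box (a b a' b' : V) : box a b `&` box a' b' =
  box (\col_i Num.max (a i ord0) (a' i ord0)) (\col_i Num.min (b i ord0) (b' i ord0)).
Proof.
apply/seteqP; split => x /=.
  move=> [h h'] i; rewrite !mxE gt_max le_min.
  by have /andP[-> ->] := h i; have /andP[-> ->] := h' i.
move=> h; split => i; have := h i; rewrite !mxE gt_max le_min;
  by case/andP => /andP[? ?] /andP[? ?]; apply/andP.
Qed.

Lemma box_eq0 (a b : V) : ~ (forall i, a i ord0 <= b i ord0) -> box a b = set0.
Proof.
move=> /existsNP [i /negP]; rewrite -ltNge => ba.
apply/seteqP; split => // x /(_ i) /andP[ax xb].
by have := lt_le_trans ax xb; rewrite ltNge (ltW ba).
Qed.

Lemma measurable_fun_Rd (F : V -> V) : (forall i, continuous (fun x => F x i ord0)) ->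
  measurable_fun (setT : set B) (F : B -> B).
Proof.
move=> cF; apply: (measurability _ Rd_borel_boxes).
by move=> _ [_ [a [b ->]] <-]; rewrite setTI; exact: measurable_preimage_box.
Qed.

Lemma measurable_affine (M : 'M[R]_d) (v : V) :
  measurable_fun (setT : set B) (fun x : B => (M *m x + v : B)).
Proof. by apply: measurable_fun_Rd => i; exact: continuous_affine_coord. Qed.

Lemma measure_unique_boxes (m1 m2 : {measure set B -> \bar R}) :
  (forall a b : V, (forall i, a i ord0 <= b i ord0) -> m1 (box a b) = m2 (box a b)) ->
  (forall a b : V, (m1 (box a b) < +oo)%E) ->
  forall A : set B, measurable A -> m1 A = m2 A.
Proof.
move=> m12 m1_fin A mA.
pose cube (n : nat) : set B := box (const_mx (- n%:R)) (const_mx n%:R).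
apply: (@measure_unique _ R B (boxes : set (set B)) cube) => //.
- exact: Rd_borel_boxes.
- by move=> _ _ [a [b ->]] [a' [b' ->]]; rewrite setI_box; do 2 eexists.
- by move=> n; do 2 eexists.
- apply/seteqP; split => // x _.
  pose s := \sum_j `|x j ord0|.
  exists (Num.truncn s).+1 => // i; rewrite !mxE.
  have xs : `|x i ord0| < (Num.truncn s).+1%:R.
    apply: le_lt_trans (truncnS_gt s).
    by rewrite /s (bigD1 i) //= lerDl sumr_ge0.
  by move: xs; rewrite ltr_norml => /andP[-> /ltW ->].
- move=> _ [a [b ->]]; have [/m12 //|ab] := pselect (forall i, a i ord0 <= b i ord0).
  by rewrite box_eq0 // !measure0.
- by move=> n; exact: m1_fin.
Qed.

End Rd_borel_boxes.

Lemma ge0_additive_linear (R : realType) (f : R -> R) :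
  (forall s, 0 <= s -> 0 <= f s) ->
  (forall s t, 0 <= s -> 0 <= t -> f (s + t) = f s + f t) ->
  forall t, 0 <= t -> f t = t * f 1.
Proof.
move=> f_ge0 fD.
have f0 : f 0 = 0 by have := fD 0 0 (lexx _) (lexx _); rewrite addr0; lra.
have fMn n t : 0 <= t -> f (n%:R * t) = n%:R * f t.
  move=> t0; elim: n => [|n IH]; first by rewrite !mul0r f0.
  by rewrite -addn1 natrD !mulrDl !mul1r fD ?mulr_ge0 // IH.
have f_nat n : f n%:R = n%:R * f 1 by rewrite -[in LHS](mulr1 n%:R) fMn.
have f_mono s t : 0 <= s -> s <= t -> f s <= f t.
  move=> s0 st; rewrite -(subrK s t) fD ?subr_ge0 //.
  by rewrite lerDr f_ge0 // subr_ge0.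
move=> t t0; have f1_ge0 := f_ge0 1 ler01.
(* Squeezing [n t] between consecutive integers bounds the error by [f 1 / n]. *)
have err_le n : n%:R * `|f t - t * f 1| <= f 1.
  pose m := Num.truncn (n%:R * t).
  have mle : m%:R <= n%:R * t by rewrite truncn_le mulr_ge0.
  have ltm1 : n%:R * t < m.+1%:R by exact: truncnS_gt.
  have := f_mono _ _ (ler0n _ m) mle.
  have := f_mono _ _ (mulr_ge0 (ler0n _ n) t0) (ltW ltm1).
  rewrite !f_nat fMn // -natr1 in ltm1 *.
  move=> *; rewrite -normr_nat -normrM ler_norml; apply/andP; split; nra.
apply/eqP; rewrite -subr_eq0 -normr_eq0; apply/eqP/le_anti.
rewrite normr_ge0 andbT leNgt; apply/negP => err_gt0.
have := err_le (Num.truncn (f 1 / `|f t - t * f 1|)).+1.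
by rewrite leNgt -ltr_pdivrMr // truncnS_gt.
Qed.

Section lebesgue_translation.
Variables (R : realType) (d : nat).
Local Notation V := 'cV[R]_d.
Local Notation B := (Rd_borel R d).
Variable mu : {measure set B -> \bar R}.
Hypothesis mu_box : is_lebesgue_measure mu.

Lemma lebesgue_box_lty (a b : V) : (mu (box a b) < +oo)%E.
Proof.
have [ab|ab] := pselect (forall i, a i ord0 <= b i ord0); first by rewrite mu_box // ltry.
by rewrite box_eq0 // measure0 ltry.
Qed.

Lemma measurable_shift (v : V) : measurable_fun (setT : set B) (fun x : B => (x + v : B)).
Proof.
rewrite (_ : (fun x => _) = fun x : B => (1%:M *m x + v : B)).
  exact: measurable_affine.
by apply/funext => x; rewrite mul1mx.
Qed.

Lemma measurable_preimage_shift (v : V) (A : set B) :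
  measurable A -> measurable ((fun x : B => (x + v : B)) @^-1` A).
Proof. by move=> mA; rewrite -[X in measurable X]setTI; exact: measurable_shift. Qed.

Lemma preimage_shift_box (a b v : V) :
  (fun x => x + v) @^-1` box a b = box (a - v) (b - v).
Proof. by apply/seteqP; split => x /= h i; have := h i; rewrite !mxE ltrBlDr lerBrDr. Qed.

Lemma lebesgue_shift_invariant (v : V) (A : set B) : measurable A ->
  mu ((fun x => x + v) @^-1` A) = mu A.
Proof.
move=> mA; have mshift := measurable_shift v.
apply: (measure_unique_boxes
  (m1 := pushforward mu (fun x : B => (x + v : B))) (m2 := mu) _ _ mA).
- move=> a b ab; transitivity (mu (box (a - v) (b - v))).
    by rewrite -preimage_shift_box.
  rewrite !mu_box //.
    by congr (_%:E); apply: eq_bigr => i _; rewrite !mxE opprB addrA subrK.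
  by move=> i; rewrite !mxE lerD2r.
- by move=> a b; have := lebesgue_box_lty (a - v) (b - v); rewrite -preimage_shift_box.
Qed.

Section translation_invariant_measure.
Variable nu : {measure set B -> \bar R}.
Hypothesis nu_shift : forall (v : V) (A : set B), measurable A ->
  nu ((fun x => x + v) @^-1` A) = nu A.
Hypothesis nu_box_lty : forall a b : V, (nu (box a b) < +oo)%E.

Let F (t : V) := fine (nu (box 0 t)).

Let nu_box0E (t : V) : nu (box 0 t) = (F t)%:E.
Proof. by rewrite fineK // ge0_fin_numE ?nu_box_lty // measure_ge0. Qed.

Let F_ge0 t : 0 <= F t.
Proof. by apply: fine_ge0; exact: measure_ge0. Qed.

Definition mx_set_coord (t : V) (i : 'I_d) (s : R) : V :=
  \col_j (if j == i then s else t j ord0).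

(* The box with side [s + u] in direction [i] is the disjoint union of the box
   with side [s] and a translate of the box with side [u]. *)
Let F_coord_additive t i s u : 0 <= s -> 0 <= u ->
  F (mx_set_coord t i (s + u)) = F (mx_set_coord t i s) + F (mx_set_coord t i u).
Proof.
move=> s0 u0; pose w : V := \col_j (if j == i then s else 0).
have split_box : box 0 (mx_set_coord t i (s + u)) =
    box 0 (mx_set_coord t i s) `|` ((fun x => x - w) @^-1` box 0 (mx_set_coord t i u)).
  apply/seteqP; split => x /=.
    move=> h; case: (leP (x i ord0) s) => xs; [left|right] => j; have := h j;
      rewrite !mxE; case: eqP => [->|_] /andP[h1 h2]; apply/andP; split; lra.
  by move=> [] h j; have := h j; rewrite !mxE; case: eqP => [->|_] /andP[h1 h2];
    apply/andP; split; lra.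
have disj : box 0 (mx_set_coord t i s) `&`
    ((fun x => x - w) @^-1` box 0 (mx_set_coord t i u)) = set0.
  apply/seteqP; split => // x /= [h h']; have := h i; have := h' i.
  by rewrite !mxE eqxx => /andP[h1 h2] /andP[h3 h4]; lra.
apply: EFin_inj; rewrite EFinD -!nu_box0E split_box measureU //.
- by congr (_ + _)%E; apply: nu_shift; exact: measurable_box.
- exact: measurable_box.
- by apply: measurable_preimage_shift; exact: measurable_box.
Qed.

Let F_coord_linear t i s : 0 <= s ->
  F (mx_set_coord t i s) = s * F (mx_set_coord t i 1).
Proof.
apply: (ge0_additive_linear (f := fun s => F (mx_set_coord t i s))) => [s' _|s' u s0 u0].
  exact: F_ge0.
exact: F_coord_additive.
Qed.

Let F_prod (s : seq 'I_d) (t : V) : uniq s -> (forall i, 0 <= t i ord0) ->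
  F t = (\prod_(i <- s) t i ord0) * F (\col_i (if i \in s then 1 else t i ord0)).
Proof.
move=> + t_ge0; elim: s => [_|i s IH /andP[i_s s_uniq]].
  by rewrite big_nil mul1r; congr F; apply/matrixP => j k; rewrite !mxE (ord1 k).
rewrite (IH s_uniq) big_cons [t i ord0 * _]mulrC -mulrA; congr (_ * _).
rewrite (_ : \col_j _ = mx_set_coord (\col_j (if j \in s then 1 else t j ord0)) i (t i ord0)).
  rewrite F_coord_linear //; congr (_ * F _); apply/matrixP => j k.
  by rewrite !mxE inE; case: eqP.
apply/matrixP => j k; rewrite !mxE; case: eqP => [->|//].
by rewrite (negbTE i_s).
Qed.

Lemma translation_invariant_measure_multiple :
  exists c : {nonneg R}, forall A, measurable A -> nu A = ((c%:num)%:E * mu A)%E.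
Proof.
pose c := NngNum (F_ge0 (const_mx 1)); exists c => A mA.
have nu_box (a b : V) : (forall i, a i ord0 <= b i ord0) ->
    nu (box a b) = ((\prod_(i < d) (b i ord0 - a i ord0)) * F (const_mx 1))%:E.
  move=> ab; rewrite (_ : box a b = (fun x => x - a) @^-1` box 0 (b - a)); last first.
    by rewrite preimage_shift_box sub0r !opprK subrK.
  rewrite nu_shift; last exact: measurable_box.
  apply: (etrans (nu_box0E (b - a))); rewrite (F_prod (index_enum_uniq 'I_d)); last first.
    by move=> i; rewrite !mxE subr_ge0.
  congr (_ * F _)%:E; first by apply: eq_bigr => i _; rewrite !mxE.
  by apply/matrixP => i j; rewrite !mxE mem_index_enum.
change (nu A = mscale c mu A); apply: measure_unique_boxes mA => [a b ab|a b //].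
rewrite nu_box //; transitivity ((c%:num)%:E * mu (box a b))%E => //.
by rewrite mu_box // -EFinM mulrC.
Qed.

End translation_invariant_measure.

End lebesgue_translation.

Section sqnorm.
Variables (R : realType) (d : nat).
Local Notation V := 'cV[R]_d.

Definition sqnorm (v : V) := \sum_i v i ord0 ^+ 2.

Lemma sqnormE (v : V) : sqnorm v = (v^T *m v) ord0 ord0.
Proof. by rewrite /sqnorm mxE; apply: eq_bigr => i _; rewrite !mxE expr2. Qed.

Lemma sqnorm_orthogonal (Q : 'M[R]_d) (v : V) : orthogonal_mx Q ->
  sqnorm (Q *m v) = sqnorm v.
Proof. by move=> QtQ; rewrite !sqnormE trmx_mul mulmxA -(mulmxA v^T) QtQ mulmx1. Qed.

Lemma enorm_orthogonal (Q : 'M[R]_d) (v : V) : orthogonal_mx Q ->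
  enorm (Q *m v) = enorm v.
Proof. by move=> QtQ; rewrite /enorm -!/(sqnorm _) sqnorm_orthogonal. Qed.

Lemma continuous_sqnorm : continuous sqnorm.
Proof.
apply: continuous_sum_fun => j x.
rewrite (_ : (fun v => _) = (fun v : V => v j ord0) \* (fun v : V => v j ord0)).
  by apply: continuousM; exact: coord_continuous.
by apply/funext => v; rewrite expr2.
Qed.

Lemma sqr_coord_le_sqnorm (v : V) i : v i ord0 ^+ 2 <= sqnorm v.
Proof. by rewrite /sqnorm (bigD1 i) //= lerDl sumr_ge0 // => j _; rewrite sqr_ge0. Qed.

Definition sqball (r : R) : set V := [set v | sqnorm v <= r].

Lemma sqball_sub_box r : sqball r `<=` box (const_mx (- (r + 1))) (const_mx (r + 1)).
Proof.
move=> v vr i; have := le_trans (sqr_coord_le_sqnorm v i) vr.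
by rewrite !mxE expr2 => ?; apply/andP; split; nra.
Qed.

Lemma box_sub_sqball (a b : V) :
  box a b `<=` sqball (\sum_i (`|a i ord0| + `|b i ord0|) ^+ 2).
Proof.
move=> v vab; apply: ler_sum => i _; have /andP[av vb] := vab i.
have := ler_norm (b i ord0); have := ler_norm (- a i ord0); rewrite normrN.
have := normr_ge0 (a i ord0); have := normr_ge0 (b i ord0).
move=> *; have : (`|a i ord0| + `|b i ord0| - v i ord0) *
  (`|a i ord0| + `|b i ord0| + v i ord0) >= 0 by apply: mulr_ge0; lra.
by rewrite expr2; nra.
Qed.

End sqnorm.

Section lebesgue_rigid_motion.
Variables (R : realType) (d : nat).
Local Notation V := 'cV[R]_d.
Local Notation B := (Rd_borel R d).
Variable mu : {measure set B -> \bar R}.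
Hypothesis mu_box : is_lebesgue_measure mu.

Let measurable_sqball r : measurable (sqball r : set B).
Proof. by apply: measurable_Rd_le; exact: continuous_sqnorm. Qed.

Let sqball1_gt0 : (0 < mu (sqball 1))%E.
Proof.
pose e : R := (d.+1%:R)^-1 / 2.
have e_gt0 : 0 < e by rewrite divr_gt0 ?invr_gt0.
have small_box : box (const_mx (- e) : V) (const_mx e) `<=` sqball 1.
  move=> v /box_sub_sqball; rewrite /sqball /= => /le_trans; apply.
  under eq_bigr do rewrite !mxE normrN gtr0_norm // -mulr2n -mulr_natr divfK ?pnatr_eq0 //.
  rewrite sumr_const card_ord -[_ *+ d]mulr_natl expr2 mulrA mulr_ile1 ?mulr_ge0 ?invr_ge0 //.
    by rewrite ler_pdivrMr ?ltr0Sn // mul1r ler_nat.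
  by rewrite invf_le1 ?ltr0Sn // ler1n.
apply: (@lt_le_trans _ _ (mu (box (const_mx (- e)) (const_mx e)))).
  rewrite mu_box => [|i]; last by rewrite !mxE; lra.
  by rewrite lte_fin; apply: prodr_gt0 => i _; rewrite !mxE; lra.
by apply: le_measure; rewrite ?inE //; exact: measurable_box.
Qed.

Let sqball_lty r : (mu (sqball r) < +oo)%E.
Proof.
apply: le_lt_trans (lebesgue_box_lty mu_box (const_mx (- (r + 1))) (const_mx (r + 1))).
by apply: le_measure; rewrite ?inE //; [exact: measurable_box|exact: sqball_sub_box].
Qed.

Variable Q : 'M[R]_d.
Hypothesis QtQ : orthogonal_mx Q.

Let rot (x : B) : B := Q *m x.

Let measurable_rot : measurable_fun setT rot.
Proof.
rewrite (_ : rot = fun x : B => (Q *m x + 0 : B)); first exact: measurable_affine.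
by apply/funext => x; rewrite addr0.
Qed.

Lemma lebesgue_rotation_invariant (A : set B) : measurable A ->
  mu ((fun x : B => (Q *m x : B)) @^-1` A) = mu A.
Proof.
have QQt : Q *m Q^T = 1%:M by exact: mulmx1C.
have preimage_rot_sqball r : rot @^-1` sqball r = sqball r.
  by apply/seteqP; split => v; rewrite /preimage /sqball /= sqnorm_orthogonal.
have [c nuE] : exists c : {nonneg R}, forall A, measurable A ->
    pushforward mu rot A = ((c%:num)%:E * mu A)%E.
  apply: translation_invariant_measure_multiple => // [v A' mA'|a b].
    rewrite /= /pushforward (_ : rot @^-1` _ = (fun x => x + Q^T *m v) @^-1` (rot @^-1` A')).
      rewrite lebesgue_shift_invariant //.
      by rewrite -[X in measurable X]setTI; exact: measurable_rot.
    by apply/seteqP; split => x; rewrite /preimage /rot /= mulmxDr mulmxA QQt mul1mx.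
  rewrite /= /pushforward.
  apply: le_lt_trans (sqball_lty (\sum_i (`|a i ord0| + `|b i ord0|) ^+ 2)).
  rewrite -preimage_rot_sqball; apply: le_measure; rewrite ?inE.
  - by rewrite -[X in measurable X]setTI; apply: measurable_rot => //; exact: measurable_box.
  - by rewrite -[X in measurable X]setTI; exact: measurable_rot.
  - by move=> x xab; exact: box_sub_sqball xab.
have c1 : c%:num = 1.
  have := nuE _ (measurable_sqball 1); rewrite /= /pushforward preimage_rot_sqball.
  have : mu (sqball 1) \is a fin_num by rewrite ge0_fin_numE ?sqball_lty.
  move: sqball1_gt0; case: (mu (sqball 1)) => // m; rewrite lte_fin => m_gt0 _.
  rewrite -EFinM; case=> m_cm.
  by apply: (@mulIf _ m); rewrite ?gt_eqF // mul1r -m_cm.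
by move=> mA; rewrite -[LHS]/(pushforward mu rot A) nuE // c1 mul1e.
Qed.

Lemma lebesgue_rigid_invariant (g : V) (A : set B) : measurable A ->
  mu ((fun x : B => (Q *m x + g : B)) @^-1` A) = mu A.
Proof.
move=> mA.
rewrite (_ : _ @^-1` A = (fun x : B => (Q *m x : B)) @^-1`
  ((fun x : B => (x + g : B)) @^-1` A)) //.
rewrite lebesgue_rotation_invariant; first exact: lebesgue_shift_invariant.
exact: measurable_preimage_shift.
Qed.

End lebesgue_rigid_motion.

Section ino_scalar_invariance.
Variables (R : realType) (d k dh dQ L : nat) (tau : R) (sigma : R -> R).
Local Notation B := (Rd_borel R d).
Variables (mu : {measure set B -> \bar R}) (th : ino_params R k dh dQ).
Variables S S' : B -> B.
Hypotheses (mS : measurable_fun setT S) (mS' : measurable_fun setT S').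
Hypothesis muS : forall A, measurable A -> mu (S @^-1` A) = mu A.
Hypothesis muS' : forall A, measurable A -> mu (S' @^-1` A) = mu A.
Hypothesis SK : cancel S' S.
Variables (Om Om' : set 'cV[R]_d) (enc enc' : 'cV[R]_d -> 'cV[R]_d -> 'cV[R]_k).
Variables f f' : 'cV[R]_d -> 'cV[R]_d.
Hypothesis preimage_dom : S @^-1` Om' = Om.
Hypothesis enorm_f' : forall x, Om x -> enorm (f' (S x)) = enorm (f x).
Hypothesis enc'_S : forall x y, Om x -> Om y -> enc' (S x) (S y) = enc x y.

Lemma ino_hidden_comp j x : Om x ->
  ino_hidden tau sigma mu th Om' enc' f' j (S x) = ino_hidden tau sigma mu th Om enc f j x.
Proof.
elim: j x => [|j IH] x Ox; rewrite [LHS]/= [RHS]/=; first by rewrite enorm_f'.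
suff -> : ino_int mu th Om' enc' f' (ino_hidden tau sigma mu th Om' enc' f' j) (S x) =
    ino_int mu th Om enc f (ino_hidden tau sigma mu th Om enc f j) x by rewrite IH.
rewrite /ino_int; apply: eq_mx => i o; rewrite /Rintegral.
rewrite (integral_measure_preserving mS mS' muS muS' SK) preimage_dom.
congr fine; apply: eq_integral => y /[!inE] Oy.
by rewrite IH // /ino_kernel enc'_S // !enorm_f'.
Qed.

Lemma ino_scalar_comp x : Om x ->
  ino_scalar L tau sigma mu th Om' enc' f' (S x) = ino_scalar L tau sigma mu th Om enc f x.
Proof. by move=> Ox; rewrite /ino_scalar ino_hidden_comp. Qed.

End ino_scalar_invariance.

Theorem theorem1 (R : realType) (d k dh dQ L : nat) (tau : R) (sigma : R -> R)
  (mu : {measure set (Rd_borel R d) -> \bar R})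
  (th : ino_params R k dh dQ)
  (Om : set 'cV[R]_d) (f ft : 'cV[R]_d -> 'cV[R]_d)
  (enc enct : 'cV[R]_d -> 'cV[R]_d -> 'cV[R]_k)
  (g : 'cV[R]_d) (Q : 'M[R]_d) :
  (0 < d)%N -> 0 < tau -> (0 < dh)%N -> (0 < L)%N -> (0 < dQ)%N ->
  is_lebesgue_measure mu ->
  bounded_domain Om ->
  orthogonal_mx Q ->
  (* transformed input: ft (Q x + g) = Q f(x) on Om *)
  (forall x, Om x -> ft (Q *m x + g) = Q *m f x) ->
  (* frame invariance of the edge encoding *)
  (forall x y, Om x -> Om y -> enct (Q *m x + g) (Q *m y + g) = enc x y) ->
  forall x, Om x ->
    ino_scalar L tau sigma mu th [set Q *m z + g | z in Om] enct ft (Q *m x + g)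
    = ino_scalar L tau sigma mu th Om enc f x.
Proof.
move=> _ _ _ _ _ mu_box _ QtQ ft_f enct_enc x Ox.
have QQt : Q *m Q^T = 1%:M by exact: mulmx1C.
have QtK : orthogonal_mx Q^T by rewrite /orthogonal_mx trmxK QQt.
pose S (y : Rd_borel R d) : Rd_borel R d := Q *m y + g.
pose S' (y : Rd_borel R d) : Rd_borel R d := Q^T *m y - Q^T *m g.
have SK : cancel S' S by move=> y; rewrite /S /S' mulmxBr !mulmxA QQt !mul1mx subrK.
have S'K : cancel S S' by move=> y; rewrite /S /S' mulmxDr mulmxA QtQ mul1mx addrK.
rewrite -/(S x); apply: (ino_scalar_comp L tau sigma th _ _ _ _ SK) => //.
- exact: measurable_affine.
- exact: measurable_affine.
- by move=> A; exact: lebesgue_rigid_invariant.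
- by move=> A; exact: lebesgue_rigid_invariant.
- by apply/seteqP; split => [y [z Oz /(can_inj S'K) <-//]|y Oy]; exists y.
- by move=> y Oy; rewrite /S ft_f // enorm_orthogonal.
Qed.
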